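(* Let $1<p<\infty$, $\varepsilon>0$, and let $u$ be a smooth solution of $u_t=a_{ij}(\nabla u)u_{ij}$ in $Q_1$, where $a_{ij}(q)=\delta_{ij}+(p-2)\frac{q_iq_j}{|q|^2+\varepsilon^2}$. Let $\varphi:=(|\nabla u|^2+\varepsilon^2)^{p/2}$. Then $$\partial_t\varphi-a_{ij}(\nabla u)\partial_{ij}\varphi\le0\quad\text{in }Q_1.$$
   Context: $\nabla$ is the spatial gradient, $u_{ij}=\partial_{x_ix_j}u$, summation over repeated indices, $Q_1=B_1\times(-1,0]$ with $B_1$ the unit ball of $\mathbb{R}^n$. *)

From Stdlib Require Import Reals Lra Lia List.
Open Scope R_scope.

(* A point of R^n is represented by x : nat -> R with x k = 0 for k >= n. *)
Definition pt := nat -> R.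

Definition upd (x : pt) (i : nat) (r : R) : pt :=
  fun k => if Nat.eqb k i then r else x k.

Fixpoint sumR (n : nat) (f : nat -> R) : R :=
  match n with O => 0 | S m => sumR m f + f m end.

Definition sqnorm (n : nat) (x : pt) : R := sumR n (fun i => x i ^ 2).

Definition in_B1 (n : nat) (x : pt) : Prop :=
  (forall k, (n <= k)%nat -> x k = 0) /\ sqnorm n x < 1.

Definition in_Q1 (n : nat) (x : pt) (t : R) : Prop :=
  in_B1 n x /\ -1 < t <= 0.

Inductive dir := Sp (i : nat) | Tm.

Definition valid_dir (n : nat) (d : dir) : Prop :=
  match d with Sp i => (i < n)%nat | Tm => True end.

Definition mvx (d : dir) (x : pt) (h : R) : pt :=
  match d with Sp i => upd x i (x i + h) | Tm => x end.
Definition mvt (d : dir) (t : R) (h : R) : R :=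
  match d with Sp _ => t | Tm => t + h end.

(* g is the partial derivative of f in direction d at every point of Q_1,
   the difference quotient being taken within Q_1 (so at t = 0 the time
   derivative is the left derivative; spatial ones are two-sided). *)
Definition has_partial_Q1 (n : nat) (f g : pt -> R -> R) (d : dir) : Prop :=
  forall x t, in_Q1 n x t ->
  forall eps, 0 < eps -> exists delta, 0 < delta /\
    forall h, h <> 0 -> Rabs h < delta -> in_Q1 n (mvx d x h) (mvt d t h) ->
      Rabs ((f (mvx d x h) (mvt d t h) - f x t) / h - g x t) < eps.

Definition continuous_Q1 (n : nat) (f : pt -> R -> R) : Prop :=
  forall x t, in_Q1 n x t ->
  forall eps, 0 < eps -> exists delta, 0 < delta /\
    forall y s, in_Q1 n y s ->
      sqnorm n (fun k => y k - x k) + (s - t) ^ 2 < delta ^ 2 ->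
      Rabs (f y s - f x t) < eps.

(* D is a family of all iterated partial derivatives of u on Q_1
   (D (d :: l) = partial_d (D l)), all continuous: u is smooth (C^infty)
   in Q_1, and D l is its derivative along the list of directions l. *)
Definition smooth_family (n : nat) (u : pt -> R -> R)
    (D : list dir -> pt -> R -> R) : Prop :=
  (forall x t, in_Q1 n x t -> D nil x t = u x t) /\
  (forall l, continuous_Q1 n (D l)) /\
  (forall l d, valid_dir n d -> has_partial_Q1 n (D l) (D (d :: l)) d).

Definition kron (i j : nat) : R := if Nat.eqb i j then 1 else 0.

Definition acoef (n : nat) (p eps : R) (q : pt) (i j : nat) : R :=
  kron i j + (p - 2) * (q i * q j) / (sqnorm n q + eps ^ 2).

Definition gradD (D : list dir -> pt -> R -> R) (x : pt) (t : R) : pt :=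
  fun i => D (Sp i :: nil) x t.

Definition aop (n : nat) (p eps : R) (q : pt) (M : nat -> nat -> R) : R :=
  sumR n (fun i => sumR n (fun j => acoef n p eps q i j * M i j)).

Definition phiD (n : nat) (p eps : R) (D : list dir -> pt -> R -> R) :
    pt -> R -> R :=
  fun x t => Rpower (sqnorm n (gradD D x t) + eps ^ 2) (p / 2).

From Stdlib Require Import Reals List.
From Stdlib Require Import Lra Lia FunctionalExtensionality.
Open Scope R_scope.

(* Write q = ∇u, H = D²u and W = |q|² + ε², so that φ = W^(p/2).  Differentiating the
   equation in x_k gives u_tk = ∂_k(a_ij(∇u)) u_ij + a_ij(∇u) u_kij, and substituting into
   φ_t - a_ij φ_ij the third derivatives of u cancel, leaving
     - p W^(p/2-1) (|H|² + p (p - 2) (q·Hq)² / W²).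
   By Cauchy-Schwarz (q·Hq)² <= |H|² |q|⁴ <= |H|² W², and p (p - 2) >= -1, so the bracket
   is nonnegative.  The analytic input is the symmetry of mixed partial derivatives, proved
   from the mean value theorem and continuity; at t = 0 the time derivative is one-sided,
   and the symmetry there is obtained as a limit from t < 0. *)

Lemma sumR_ext m f g : (forall k, (k < m)%nat -> f k = g k) -> sumR m f = sumR m g.
Proof. induction m; simpl; intros E; [reflexivity|]. rewrite IHm, E; auto. Qed.

Lemma sumR_plus m f g : sumR m (fun k => f k + g k) = sumR m f + sumR m g.
Proof. induction m; simpl; [ring|rewrite IHm; ring]. Qed.

Lemma sumR_minus m f g : sumR m (fun k => f k - g k) = sumR m f - sumR m g.
Proof. induction m; simpl; [ring|rewrite IHm; ring]. Qed.

Lemma sumR_scal_l m c f : sumR m (fun k => c * f k) = c * sumR m f.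
Proof. induction m; simpl; [ring|rewrite IHm; ring]. Qed.

Lemma sumR_scal_r m c f : sumR m (fun k => f k * c) = sumR m f * c.
Proof. induction m; simpl; [ring|rewrite IHm; ring]. Qed.

Lemma sumR_0 m : sumR m (fun _ => 0) = 0.
Proof. induction m; simpl; [ring|rewrite IHm; ring]. Qed.

Lemma sumR_swap m m' f :
  sumR m (fun i => sumR m' (fun j => f i j)) = sumR m' (fun j => sumR m (fun i => f i j)).
Proof. induction m; simpl; [now rewrite sumR_0|]. now rewrite IHm, <- sumR_plus. Qed.

Lemma sumR_single m i f : (i < m)%nat ->
  (forall k, (k < m)%nat -> k <> i -> f k = 0) -> sumR m f = f i.
Proof.
  induction m; intros Hi H; [lia|]. simpl.
  destruct (Nat.eq_dec i m) as [->|ne].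
  - rewrite (sumR_ext m f (fun _ => 0)), sumR_0; [ring|].
    intros; apply H; lia.
  - rewrite IHm, (H m); [ring|lia|auto|lia|intros; apply H; lia].
Qed.

Lemma sumR_nonneg m f : (forall k, (k < m)%nat -> 0 <= f k) -> 0 <= sumR m f.
Proof.
  induction m; simpl; intros H; [lra|].
  assert (0 <= f m) by auto. assert (0 <= sumR m f) by auto. lra.
Qed.

Lemma sumR_le_term m f i : (forall k, (k < m)%nat -> 0 <= f k) -> (i < m)%nat ->
  f i <= sumR m f.
Proof.
  induction m; simpl; intros H Hi; [lia|].
  destruct (Nat.eq_dec i m) as [->|ne].
  - assert (0 <= sumR m f) by (apply sumR_nonneg; auto). lra.
  - assert (f i <= sumR m f) by (apply IHm; auto; lia). assert (0 <= f m) by auto. lra.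
Qed.

Lemma sumR_kron m i f : (i < m)%nat -> sumR m (fun j => kron i j * f j) = f i.
Proof.
  intros Hi. rewrite (sumR_single m i); [unfold kron; rewrite Nat.eqb_refl; ring|auto|].
  intros k _ ne; unfold kron. destruct (Nat.eqb_spec i k); [lia|ring].
Qed.

Lemma sqnorm_nonneg n y : 0 <= sqnorm n y.
Proof. apply sumR_nonneg; intros; apply pow2_ge_0. Qed.

Lemma sqnorm_ge_coord n y i : (i < n)%nat -> y i ^ 2 <= sqnorm n y.
Proof. intros. apply (sumR_le_term n (fun k => y k ^ 2)); auto. intros; apply pow2_ge_0. Qed.

Definition dsum n (f : nat -> nat -> R) : R := sumR n (fun i => sumR n (fun j => f i j)).

Lemma dsum_ext n f g : (forall i j, (i < n)%nat -> (j < n)%nat -> f i j = g i j) ->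
  dsum n f = dsum n g.
Proof. intros; unfold dsum; apply sumR_ext; intros; apply sumR_ext; auto. Qed.

Lemma dsum_plus n f g : dsum n (fun i j => f i j + g i j) = dsum n f + dsum n g.
Proof. unfold dsum. rewrite <- sumR_plus. apply sumR_ext; intros; apply sumR_plus. Qed.

Lemma dsum_minus n f g : dsum n (fun i j => f i j - g i j) = dsum n f - dsum n g.
Proof. unfold dsum. rewrite <- sumR_minus. apply sumR_ext; intros; apply sumR_minus. Qed.

Lemma dsum_scal n c f : dsum n (fun i j => c * f i j) = c * dsum n f.
Proof. unfold dsum. rewrite <- sumR_scal_l. apply sumR_ext; intros; apply sumR_scal_l. Qed.

Lemma dsum_transpose n f : dsum n f = dsum n (fun i j => f j i).
Proof. apply sumR_swap. Qed.

Lemma dsum_prod n u v : dsum n (fun i j => u i * v j) = sumR n u * sumR n v.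
Proof. unfold dsum. rewrite <- sumR_scal_r. apply sumR_ext; intros. apply sumR_scal_l. Qed.

Lemma dsum_nonneg n f : (forall i j, 0 <= f i j) -> 0 <= dsum n f.
Proof. intros; apply sumR_nonneg; intros; apply sumR_nonneg; auto. Qed.

Lemma dsum_sumR_swap n (f : nat -> nat -> nat -> R) :
  dsum n (fun i j => sumR n (fun k => f i j k)) = sumR n (fun k => dsum n (fun i j => f i j k)).
Proof.
  unfold dsum. rewrite (sumR_ext n _ (fun i => sumR n (fun k => sumR n (fun j => f i j k))))
    by (intros; apply sumR_swap). apply sumR_swap.
Qed.

(* The quadratic [l ↦ Σ (l a + b)²] is nonnegative, so its discriminant is not positive. *)
Lemma dsum_Cauchy_Schwarz n a b : (dsum n (fun i j => a i j * b i j)) ^ 2 <=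
  dsum n (fun i j => a i j ^ 2) * dsum n (fun i j => b i j ^ 2).
Proof.
  set (A := dsum n (fun i j => a i j ^ 2)). set (B := dsum n (fun i j => a i j * b i j)).
  set (C := dsum n (fun i j => b i j ^ 2)).
  assert (Hquad : forall l, 0 <= l ^ 2 * A + 2 * l * B + C).
  { intros l. replace (l ^ 2 * A + 2 * l * B + C) with (dsum n (fun i j => (l * a i j + b i j) ^ 2)).
    - apply dsum_nonneg; intros; apply pow2_ge_0.
    - unfold A, B, C. rewrite <- !dsum_scal, <- !dsum_plus. apply dsum_ext; intros; ring. }
  assert (HA : 0 <= A) by (apply dsum_nonneg; intros; apply pow2_ge_0).
  destruct (Req_dec A 0) as [A0|A0].
  - rewrite A0 in *. destruct (Req_dec B 0) as [B0|B0]; [rewrite B0; nra|].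
    specialize (Hquad (- (C + 1) / (2 * B))).
    replace (2 * (- (C + 1) / (2 * B)) * B) with (- (C + 1)) in Hquad by (field; auto). nra.
  - specialize (Hquad (- B / A)).
    replace ((- B / A) ^ 2 * A + 2 * (- B / A) * B + C) with ((A * C - B ^ 2) / A) in Hquad
      by (field; auto).
    assert (0 <= A * C - B ^ 2).
    { apply (Rmult_le_reg_r (/ A)); [apply Rinv_0_lt_compat; lra|]. lra. }
    lra.
Qed.

(** * Difference quotients along a direction *)

Definition limit0_in (P : R -> Prop) (F : R -> R) (l : R) : Prop :=
  limit1_in F (fun h => h <> 0 /\ P h) l 0.

Lemma has_partial_Q1_limit0 n f g d :
  has_partial_Q1 n f g d <-> forall x t, in_Q1 n x t ->
    limit0_in (fun h => in_Q1 n (mvx d x h) (mvt d t h))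
      (fun h => (f (mvx d x h) (mvt d t h) - f x t) / h) (g x t).
Proof.
  unfold has_partial_Q1, limit0_in, limit1_in, limit_in; simpl; unfold R_dist.
  split; intros H x t Hq eps He; destruct (H x t Hq eps He) as [del [Hd H']];
    exists del; split; auto.
  - intros h [[h0 hq] hd]. apply H'; auto. now rewrite Rminus_0_r in hd.
  - intros h h0 hd hq. apply H'. rewrite Rminus_0_r; auto.
Qed.

Lemma limit0_in_ext P F G l : (forall h, h <> 0 -> P h -> F h = G h) ->
  limit0_in P F l -> limit0_in P G l.
Proof.
  unfold limit0_in, limit1_in, limit_in; simpl; intros E H eps He.
  destruct (H eps He) as [a [Ha H']]; exists a; split; auto.
  intros h [[h0 hp] hd]. rewrite <- E; auto.
Qed.

Lemma limit0_in_id P : limit0_in P (fun h => h) 0.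
Proof.
  intros eps He; exists eps; split; auto. intros h [_ hd]; auto.
Qed.

Lemma limit0_in_const P c : limit0_in P (fun _ => c) c.
Proof.
  intros eps He; exists 1; split; [lra|].
  intros; simpl; unfold R_dist; rewrite Rminus_diag, Rabs_R0; auto.
Qed.

Lemma limit0_in_plus P F G a b :
  limit0_in P F a -> limit0_in P G b -> limit0_in P (fun h => F h + G h) (a + b).
Proof. apply limit_plus. Qed.

Lemma limit0_in_mult P F G a b :
  limit0_in P F a -> limit0_in P G b -> limit0_in P (fun h => F h * G h) (a * b).
Proof. apply limit_mul. Qed.

Lemma limit0_in_comp P F a G : limit0_in P F a ->
  (forall eps, 0 < eps -> exists del, 0 < del /\
     forall y, Rabs (y - a) < del -> Rabs (G y - G a) < eps) ->
  limit0_in P (fun h => G (F h)) (G a).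
Proof.
  intros HF HG.
  assert (HGa : limit1_in G (fun _ => True) (G a) a).
  { intros eps He. destruct (HG eps He) as [d [Hd H']]; exists d; split; auto.
    intros y [_ hy]; apply H'; exact hy. }
  intros eps He.
  destruct (limit_comp F G _ _ a (G a) 0 HF HGa eps He) as [d [Hd H']].
  exists d; split; auto. intros h [hp hd]; apply H'; split; [split; [exact hp|exact I]|exact hd].
Qed.

Lemma limit0_in_of_quotient P F a l : limit0_in P (fun h => (F h - a) / h) l -> limit0_in P F a.
Proof.
  intro H.
  assert (H' := limit0_in_plus _ _ _ _ _ (limit0_in_mult _ _ _ _ _ H (limit0_in_id P))
                  (limit0_in_const P a)).
  rewrite Rmult_0_r, Rplus_0_l in H'.
  eapply limit0_in_ext; [|exact H']. intros h h0 _; simpl. field; auto.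
Qed.

Lemma has_partial_Q1_ext n f f' g g' d :
  (forall x t, in_Q1 n x t -> f x t = f' x t) ->
  (forall x t, in_Q1 n x t -> g x t = g' x t) ->
  has_partial_Q1 n f g d -> has_partial_Q1 n f' g' d.
Proof.
  intros Ef Eg H x t Hq eps He.
  destruct (H x t Hq eps He) as [del [Hd H']]; exists del; split; auto.
  intros h h0 hd hq. rewrite <- !Ef, <- Eg; auto.
Qed.

Lemma has_partial_Q1_const n c d : has_partial_Q1 n (fun _ _ => c) (fun _ _ => 0) d.
Proof.
  apply has_partial_Q1_limit0; intros x t _.
  eapply limit0_in_ext; [|apply limit0_in_const]. intros h h0 _; simpl; field; auto.
Qed.

Lemma has_partial_Q1_plus n f g f' g' d :
  has_partial_Q1 n f f' d -> has_partial_Q1 n g g' d ->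
  has_partial_Q1 n (fun x t => f x t + g x t) (fun x t => f' x t + g' x t) d.
Proof.
  rewrite !has_partial_Q1_limit0; intros Hf Hg x t Hq.
  eapply limit0_in_ext; [|apply limit0_in_plus; [apply Hf|apply Hg]; auto].
  intros h h0 _; simpl; field; auto.
Qed.

Lemma has_partial_Q1_mult n f g f' g' d :
  has_partial_Q1 n f f' d -> has_partial_Q1 n g g' d ->
  has_partial_Q1 n (fun x t => f x t * g x t) (fun x t => f' x t * g x t + f x t * g' x t) d.
Proof.
  rewrite !has_partial_Q1_limit0; intros Hf Hg x t Hq.
  assert (Cg := limit0_in_of_quotient _ _ _ _ (Hg x t Hq)).
  eapply limit0_in_ext;
    [|apply limit0_in_plus; [apply limit0_in_mult; [apply Hf; auto|exact Cg]|
        apply limit0_in_mult; [apply limit0_in_const|apply Hg; auto]]].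
  intros h h0 _; simpl; field; auto.
Qed.

Lemma has_partial_Q1_scal n c f f' d : has_partial_Q1 n f f' d ->
  has_partial_Q1 n (fun x t => c * f x t) (fun x t => c * f' x t) d.
Proof.
  intro H. eapply has_partial_Q1_ext;
    [| |apply (has_partial_Q1_mult n _ _ _ _ d (has_partial_Q1_const n c d) H)];
    intros; simpl; ring.
Qed.

Lemma has_partial_Q1_sum n m (F G : nat -> pt -> R -> R) d :
  (forall k, (k < m)%nat -> has_partial_Q1 n (F k) (G k) d) ->
  has_partial_Q1 n (fun x t => sumR m (fun k => F k x t)) (fun x t => sumR m (fun k => G k x t)) d.
Proof.
  induction m; intros H; simpl; [apply has_partial_Q1_const|].
  apply has_partial_Q1_plus; auto.
Qed.

(* The difference quotient of [phi] at [f x t], extended by [phi'] on the diagonal,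
   is continuous there; composing it with [f] gives the chain rule. *)
Lemma has_partial_Q1_comp n f g d (phi phi' : R -> R) :
  (forall x t, in_Q1 n x t -> derivable_pt_lim phi (f x t) (phi' (f x t))) ->
  has_partial_Q1 n f g d ->
  has_partial_Q1 n (fun x t => phi (f x t)) (fun x t => phi' (f x t) * g x t) d.
Proof.
  intros Hphi; rewrite !has_partial_Q1_limit0; intros Hf x t Hq.
  set (y0 := f x t).
  set (Q := fun y => if Req_EM_T y y0 then phi' y0 else (phi y - phi y0) / (y - y0)).
  assert (HQ0 : Q y0 = phi' y0) by (unfold Q; destruct (Req_EM_T y0 y0); congruence).
  assert (HQ : limit0_in (fun h => in_Q1 n (mvx d x h) (mvt d t h))
                 (fun h => Q (f (mvx d x h) (mvt d t h))) (Q y0)).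
  { apply limit0_in_comp; [exact (limit0_in_of_quotient _ _ _ _ (Hf x t Hq))|].
    intros eps He. destruct (Hphi x t Hq eps He) as [[del Hd] H'].
    exists del; split; auto. intros y hy. rewrite HQ0. unfold Q.
    destruct (Req_EM_T y y0) as [->|ne].
    - rewrite Rminus_diag, Rabs_R0; auto.
    - specialize (H' (y - y0)). fold y0 in H'. replace (y0 + (y - y0)) with y in H' by ring.
      apply H'; auto. intro; apply ne; lra. }
  assert (HH := limit0_in_mult _ _ _ _ _ HQ (Hf x t Hq)). rewrite HQ0 in HH.
  eapply limit0_in_ext; [|exact HH].
  intros h h0 _; simpl. unfold Q. fold y0.
  destruct (Req_EM_T (f (mvx d x h) (mvt d t h)) y0) as [e|ne].
  - rewrite e. unfold Rdiv. rewrite !Rminus_diag. ring.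
  - field. split; auto. intro; apply ne; lra.
Qed.

Lemma has_partial_Q1_Rpower n f g d c :
  (forall x t, in_Q1 n x t -> 0 < f x t) -> has_partial_Q1 n f g d ->
  has_partial_Q1 n (fun x t => Rpower (f x t) c)
    (fun x t => c * Rpower (f x t) (c - 1) * g x t) d.
Proof.
  intros Hpos. apply (has_partial_Q1_comp n f g d (fun y => Rpower y c) (fun y => c * Rpower y (c - 1))).
  intros; apply derivable_pt_lim_power; auto.
Qed.

Lemma has_partial_Q1_inv n f g d :
  (forall x t, in_Q1 n x t -> 0 < f x t) -> has_partial_Q1 n f g d ->
  has_partial_Q1 n (fun x t => / f x t) (fun x t => - g x t / f x t ^ 2) d.
Proof.
  intros Hpos H.
  assert (Hm1 : forall y, 0 < y -> Rpower y (-1) = / y).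
  { intros. replace (-1) with (- (1)) by ring. rewrite Rpower_Ropp, Rpower_1; auto. }
  assert (Hm2 : forall y, 0 < y -> Rpower y (-1 - 1) = / y ^ 2).
  { intros. replace (-1 - 1) with (- INR 2) by (simpl; ring). rewrite Rpower_Ropp, Rpower_pow; auto. }
  eapply has_partial_Q1_ext; [| |exact (has_partial_Q1_Rpower n f g d (-1) Hpos H)];
    intros x t Hq; simpl.
  - apply Hm1; auto.
  - rewrite Hm2 by auto. field. specialize (Hpos x t Hq). lra.
Qed.

Definition sp_idx (d : dir) (k : nat) : bool := match d with Sp i => Nat.eqb k i | Tm => false end.
Definition isTm (d : dir) : bool := match d with Tm => true | Sp _ => false end.

Lemma mvx_eq d y a : mvx d y a = fun k => y k + (if sp_idx d k then a else 0).
Proof.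
  apply functional_extensionality; intro k.
  destruct d; simpl; [|ring]. unfold upd. destruct (Nat.eqb_spec k i); [subst; ring|ring].
Qed.

Lemma mvt_eq d t a : mvt d t a = t + (if isTm d then a else 0).
Proof. destruct d; simpl; ring. Qed.

Lemma mvx_0 d y : mvx d y 0 = y.
Proof. rewrite mvx_eq; apply functional_extensionality; intro k; destruct (sp_idx d k); ring. Qed.

Lemma mvt_0 d t : mvt d t 0 = t.
Proof. rewrite mvt_eq; destruct (isTm d); ring. Qed.

Lemma mvx_add d y a h : mvx d (mvx d y a) h = mvx d y (a + h).
Proof. rewrite !mvx_eq; apply functional_extensionality; intro k; destruct (sp_idx d k); ring. Qed.

Lemma mvt_add d t a h : mvt d (mvt d t a) h = mvt d t (a + h).
Proof. rewrite !mvt_eq; destruct (isTm d); ring. Qed.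

Lemma mvx_comm d1 d2 y a b : mvx d1 (mvx d2 y b) a = mvx d2 (mvx d1 y a) b.
Proof.
  rewrite !mvx_eq; apply functional_extensionality; intro k.
  destruct (sp_idx d1 k), (sp_idx d2 k); ring.
Qed.

Lemma mvt_comm d1 d2 t a b : mvt d1 (mvt d2 t b) a = mvt d2 (mvt d1 t a) b.
Proof. rewrite !mvt_eq; destruct (isTm d1), (isTm d2); ring. Qed.

Lemma sumR_sp_idx n d c : valid_dir n d ->
  sumR n (fun k => if sp_idx d k then c else 0) = if isTm d then 0 else c.
Proof.
  destruct d as [i|]; simpl; intros V; [|apply sumR_0].
  rewrite (sumR_single n i); [now rewrite Nat.eqb_refl|auto|].
  intros k _ nk; destruct (Nat.eqb_spec k i); [lia|auto].
Qed.

Lemma mvx_out n d y a : valid_dir n d -> (forall k, (n <= k)%nat -> y k = 0) ->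
  forall k, (n <= k)%nat -> mvx d y a k = 0.
Proof.
  intros V H k Hk. rewrite mvx_eq, H; auto. destruct d; simpl in *; [|ring].
  destruct (Nat.eqb_spec k i); [lia|ring].
Qed.

Lemma Rabs_le_inv a b : Rabs a <= b -> - b <= a <= b.
Proof.
  intros H. assert (a <= Rabs a) by apply Rle_abs.
  assert (- a <= Rabs a) by (rewrite <- Rabs_Ropp; apply Rle_abs). lra.
Qed.

Lemma sqnorm_mvx_bound n d y a : valid_dir n d -> Rabs a <= 1 ->
  Rabs (sqnorm n (mvx d y a) - sqnorm n y) <= (2 + sqnorm n y) * Rabs a.
Proof.
  intros V Ha. unfold sqnorm. rewrite mvx_eq, <- sumR_minus.
  rewrite (sumR_ext n _ (fun k => if sp_idx d k then 2 * y k * a + a ^ 2 else 0))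
    by (intros k _; destruct (sp_idx d k); ring).
  assert (0 <= sqnorm n y) by apply sqnorm_nonneg.
  assert (0 <= Rabs a) by apply Rabs_pos.
  destruct d as [i|]; simpl in V.
  - rewrite (sumR_single n i); [|auto|intros k _ nk; cbn [sp_idx]; destruct (Nat.eqb_spec k i); [lia|auto]].
    cbn [sp_idx]. rewrite Nat.eqb_refl. fold (sqnorm n y).
    assert (Hy := sqnorm_ge_coord n y i V).
    eapply Rle_trans; [apply Rabs_triang|].
    rewrite Rabs_mult, Rabs_mult, (Rabs_right 2), <- RPow_abs by lra.
    assert (Rabs (y i) ^ 2 = y i ^ 2) by apply pow2_abs.
    assert (0 <= (Rabs (y i) - 1) ^ 2) by apply pow2_ge_0.
    assert (2 * Rabs (y i) <= 1 + sqnorm n y) by nra.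
    assert (Rabs a ^ 2 <= Rabs a) by nra.
    assert (2 * Rabs (y i) * Rabs a <= (1 + sqnorm n y) * Rabs a)
      by (apply Rmult_le_compat_r; lra).
    lra.
  - cbn [sp_idx]. rewrite sumR_0, Rabs_R0. fold (sqnorm n y). apply Rmult_le_pos; lra.
Qed.

Definition mv2x (d1 d2 : dir) (x : pt) (a b : R) : pt := mvx d1 (mvx d2 x b) a.
Definition mv2t (d1 d2 : dir) (t a b : R) : R := mvt d1 (mvt d2 t b) a.

Lemma in_B1_mv2x n d1 d2 x r a b : valid_dir n d1 -> valid_dir n d2 -> in_B1 n x ->
  r <= 1 -> r <= (1 - sqnorm n x) / 10 -> Rabs a < r -> Rabs b < r ->
  in_B1 n (mv2x d1 d2 x a b).
Proof.
  intros V1 V2 [Hout Hx] Hr1 Hr2 Ha Hb. unfold mv2x. split.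
  - apply mvx_out; auto. apply mvx_out; auto.
  - assert (B2 := sqnorm_mvx_bound n d2 x b V2 ltac:(lra)).
    assert (B1 := sqnorm_mvx_bound n d1 (mvx d2 x b) a V1 ltac:(lra)).
    apply Rabs_le_inv in B1. apply Rabs_le_inv in B2.
    assert (0 <= sqnorm n x) by apply sqnorm_nonneg.
    assert (0 <= Rabs a) by apply Rabs_pos. assert (0 <= Rabs b) by apply Rabs_pos.
    assert (sqnorm n (mvx d2 x b) <= sqnorm n x + 3 * Rabs b) by nra.
    assert ((2 + sqnorm n (mvx d2 x b)) * Rabs a <= 6 * Rabs a) by nra.
    lra.
Qed.

(* At [t = 0] only backward time moves stay in Q_1. *)
Definition interior_pair (d1 d2 : dir) (t : R) : Prop :=
  t < 0 \/ (isTm d1 = false /\ isTm d2 = false).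

Lemma in_Q1_mv2 n d1 d2 x t : valid_dir n d1 -> valid_dir n d2 -> in_Q1 n x t ->
  interior_pair d1 d2 t ->
  exists r, 0 < r /\ forall a b, Rabs a < r -> Rabs b < r ->
    in_Q1 n (mv2x d1 d2 x a b) (mv2t d1 d2 t a b).
Proof.
  intros V1 V2 [Hx Ht] Hc.
  set (r0 := Rmin 1 ((1 - sqnorm n x) / 10)).
  assert (Hr0 : 0 < r0) by (apply Rmin_glb_lt; destruct Hx; lra).
  assert (Hball : forall r a b, r <= r0 -> Rabs a < r -> Rabs b < r -> in_B1 n (mv2x d1 d2 x a b)).
  { intros r a b Hr Ha Hb. apply (in_B1_mv2x n d1 d2 x r); auto.
    - eapply Rle_trans; [exact Hr|apply Rmin_l].
    - eapply Rle_trans; [exact Hr|apply Rmin_r]. }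
  destruct Hc as [Hneg|[T1 T2]].
  - set (r := Rmin r0 (Rmin ((t + 1) / 3) (- t / 3))).
    assert (r <= r0) by apply Rmin_l.
    assert (r <= (t + 1) / 3) by (eapply Rle_trans; [apply Rmin_r|apply Rmin_l]).
    assert (r <= - t / 3) by (eapply Rle_trans; [apply Rmin_r|apply Rmin_r]).
    exists r; split; [apply Rmin_glb_lt; [exact Hr0|apply Rmin_glb_lt; lra]|].
    intros a b Ha Hb. split; [eapply Hball; eauto|]. unfold mv2t; rewrite !mvt_eq.
    apply Rabs_def2 in Ha; apply Rabs_def2 in Hb.
    destruct (isTm d1), (isTm d2); lra.
  - exists r0; split; auto. intros a b Ha Hb. split; [eapply Hball; eauto; lra|].
    unfold mv2t; rewrite !mvt_eq, T1, T2; lra.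
Qed.

(** * Symmetry of mixed partial derivatives *)

Lemma derivable_pt_lim_path n g g' d (Y : R -> pt) (T : R -> R) c r :
  has_partial_Q1 n g g' d -> 0 < r ->
  (forall h, Rabs h < r -> in_Q1 n (Y (c + h)) (T (c + h))) ->
  (forall h, Y (c + h) = mvx d (Y c) h /\ T (c + h) = mvt d (T c) h) ->
  derivable_pt_lim (fun s => g (Y s) (T s)) c (g' (Y c) (T c)).
Proof.
  intros Hg Hr Hin Hpath eps Heps.
  assert (Hc : in_Q1 n (Y c) (T c)).
  { specialize (Hin 0). rewrite Rplus_0_r in Hin. apply Hin. rewrite Rabs_R0; auto. }
  destruct (Hg _ _ Hc eps Heps) as [del [Hd H']].
  assert (Hm : 0 < Rmin del r) by (apply Rmin_glb_lt; auto).
  exists (mkposreal _ Hm). simpl. intros h h0 hd.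
  destruct (Hpath h) as [E1 E2]. rewrite E1, E2. apply H'; auto.
  - eapply Rlt_le_trans; [exact hd|apply Rmin_l].
  - rewrite <- E1, <- E2. apply Hin. eapply Rlt_le_trans; [exact hd|apply Rmin_r].
Qed.

Section TwoParameterFamily.

Variables (n : nat) (d1 d2 : dir) (x : pt) (t r : R).
Hypothesis r_pos : 0 < r.
Hypothesis in_Q1_family : forall a b, Rabs a < r -> Rabs b < r ->
  in_Q1 n (mv2x d1 d2 x a b) (mv2t d1 d2 t a b).

Lemma derivable_pt_lim_mv2_fst g g' a b :
  has_partial_Q1 n g g' d1 -> Rabs a < r / 2 -> Rabs b < r / 2 ->
  derivable_pt_lim (fun s => g (mv2x d1 d2 x s b) (mv2t d1 d2 t s b)) a
    (g' (mv2x d1 d2 x a b) (mv2t d1 d2 t a b)).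
Proof.
  intros Hg Ha Hb.
  apply (derivable_pt_lim_path n g g' d1 (fun s => mv2x d1 d2 x s b)
           (fun s => mv2t d1 d2 t s b) a (r / 2)); auto; [lra| |].
  - intros h Hh. apply in_Q1_family; [|lra].
    eapply Rle_lt_trans; [apply Rabs_triang|lra].
  - intros h; unfold mv2x, mv2t; rewrite mvx_add, mvt_add; auto.
Qed.

Lemma derivable_pt_lim_mv2_snd g g' a b :
  has_partial_Q1 n g g' d2 -> Rabs a < r / 2 -> Rabs b < r / 2 ->
  derivable_pt_lim (fun s => g (mv2x d1 d2 x a s) (mv2t d1 d2 t a s)) b
    (g' (mv2x d1 d2 x a b) (mv2t d1 d2 t a b)).
Proof.
  intros Hg Ha Hb.
  apply (derivable_pt_lim_path n g g' d2 (fun s => mv2x d1 d2 x a s)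
           (fun s => mv2t d1 d2 t a s) b (r / 2)); auto; [lra| |].
  - intros h Hh. apply in_Q1_family; [lra|].
    eapply Rle_lt_trans; [apply Rabs_triang|lra].
  - intros h; unfold mv2x, mv2t.
    rewrite !(mvx_comm d1 d2), !(mvt_comm d1 d2), mvx_add, mvt_add; auto.
Qed.

(* Two applications of the mean value theorem to the second difference
   [f(h,h) - f(h,0) - f(0,h) + f(0,0)], in either order. *)
Lemma mixed_partials_meet f f1 f2 f12 f21 h :
  has_partial_Q1 n f f1 d1 -> has_partial_Q1 n f f2 d2 ->
  has_partial_Q1 n f1 f21 d2 -> has_partial_Q1 n f2 f12 d1 -> 0 < h < r / 2 ->
  exists a1 b1 a2 b2, 0 <= a1 <= h /\ 0 <= b1 <= h /\ 0 <= a2 <= h /\ 0 <= b2 <= h /\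
    f21 (mv2x d1 d2 x a1 b1) (mv2t d1 d2 t a1 b1) = f12 (mv2x d1 d2 x a2 b2) (mv2t d1 d2 t a2 b2).
Proof.
  intros P1 P2 P21 P12 Hh.
  set (F := fun (g : pt -> R -> R) a b => g (mv2x d1 d2 x a b) (mv2t d1 d2 t a b)).
  assert (Hin : forall c, 0 <= c <= h -> Rabs c < r / 2) by (intros c Hc; rewrite Rabs_right; lra).
  destruct (MVT_cor2 (fun s => F f s h - F f s 0) (fun s => F f1 s h - F f1 s 0) 0 h)
    as [a1 [Ea1 Ha1]]; [lra| |].
  { intros c Hc. apply derivable_pt_lim_minus; apply derivable_pt_lim_mv2_fst; auto; apply Hin; lra. }
  destruct (MVT_cor2 (F f1 a1) (F f21 a1) 0 h) as [b1 [Eb1 Hb1]]; [lra| |].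
  { intros s Hs. apply derivable_pt_lim_mv2_snd; auto; apply Hin; lra. }
  destruct (MVT_cor2 (fun s => F f h s - F f 0 s) (fun s => F f2 h s - F f2 0 s) 0 h)
    as [b2 [Eb2 Hb2]]; [lra| |].
  { intros s Hs. apply derivable_pt_lim_minus; apply derivable_pt_lim_mv2_snd; auto; apply Hin; lra. }
  destruct (MVT_cor2 (fun s => F f2 s b2) (fun s => F f12 s b2) 0 h) as [a2 [Ea2 Ha2]]; [lra| |].
  { intros s Hs. apply derivable_pt_lim_mv2_fst; auto; apply Hin; lra. }
  exists a1, b1, a2, b2. repeat split; try lra.
  simpl in Ea1, Eb1, Eb2, Ea2. rewrite Eb1 in Ea1. rewrite Ea2 in Eb2.
  assert (Hsq : h * h * (F f21 a1 b1 - F f12 a2 b2) = 0) by lra.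
  assert (h * h <> 0) by (apply Rmult_integral_contrapositive; lra).
  apply Rmult_integral in Hsq as [Hsq|Hsq]; [contradiction|exact (Rminus_diag_uniq _ _ Hsq)].
Qed.

End TwoParameterFamily.

Lemma has_partial_Q1_unique n f g1 g2 d x t :
  has_partial_Q1 n f g1 d -> has_partial_Q1 n f g2 d -> valid_dir n d -> in_Q1 n x t ->
  interior_pair d d t -> g1 x t = g2 x t.
Proof.
  intros H1 H2 V Hq Hc.
  destruct (in_Q1_mv2 n d d x t V V Hq Hc) as [r [Hr Hbox]].
  assert (Hr2 : Rabs 0 < r / 2) by (rewrite Rabs_R0; lra).
  assert (U := uniqueness_limite _ _ _ _
    (derivable_pt_lim_mv2_fst n d d x t r Hr Hbox f g1 0 0 H1 Hr2 Hr2)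
    (derivable_pt_lim_mv2_fst n d d x t r Hr Hbox f g2 0 0 H2 Hr2 Hr2)).
  unfold mv2x, mv2t in U; rewrite !mvx_0, !mvt_0 in U. exact U.
Qed.

Definition dist2_Q1 n (x : pt) (t : R) (y : pt) (s : R) : R :=
  sqnorm n (fun k => y k - x k) + (s - t) ^ 2.

Lemma dist2_Q1_mv2 n d1 d2 x t a b : valid_dir n d1 -> valid_dir n d2 -> d1 <> d2 ->
  dist2_Q1 n x t (mv2x d1 d2 x a b) (mv2t d1 d2 t a b) = a ^ 2 + b ^ 2.
Proof.
  intros V1 V2 ne. unfold dist2_Q1, sqnorm, mv2x, mv2t. rewrite !mvx_eq, !mvt_eq.
  rewrite (sumR_ext n _ (fun k => (if sp_idx d1 k then a ^ 2 else 0) + (if sp_idx d2 k then b ^ 2 else 0))).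
  - rewrite sumR_plus, !sumR_sp_idx by auto.
    destruct d1, d2; simpl; try ring. congruence.
  - intros k _. destruct (sp_idx d1 k) eqn:E1, (sp_idx d2 k) eqn:E2; try ring.
    destruct d1, d2; simpl in E1, E2; try discriminate.
    apply Nat.eqb_eq in E1, E2. subst. congruence.
Qed.

Lemma continuous_Q1_eq_of_approx n f g x t :
  continuous_Q1 n f -> continuous_Q1 n g -> in_Q1 n x t ->
  (forall del, 0 < del -> exists y1 s1 y2 s2, in_Q1 n y1 s1 /\ in_Q1 n y2 s2 /\
     dist2_Q1 n x t y1 s1 < del ^ 2 /\ dist2_Q1 n x t y2 s2 < del ^ 2 /\ f y1 s1 = g y2 s2) ->
  f x t = g x t.
Proof.
  intros Cf Cg Hq Happrox. apply Rminus_diag_uniq.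
  destruct (Req_dec (f x t - g x t) 0) as [E|E]; auto. exfalso.
  set (e := Rabs (f x t - g x t)).
  assert (He : 0 < e) by (apply Rabs_pos_lt; auto).
  destruct (Cf x t Hq (e / 2) ltac:(lra)) as [del1 [Hd1 C1]].
  destruct (Cg x t Hq (e / 2) ltac:(lra)) as [del2 [Hd2 C2]].
  assert (Hdel : 0 < Rmin del1 del2) by (apply Rmin_glb_lt; auto).
  assert (Hsq1 : Rmin del1 del2 ^ 2 <= del1 ^ 2) by (apply pow_incr; split; [lra|apply Rmin_l]).
  assert (Hsq2 : Rmin del1 del2 ^ 2 <= del2 ^ 2) by (apply pow_incr; split; [lra|apply Rmin_r]).
  destruct (Happrox _ Hdel) as [y1 [s1 [y2 [s2 [Q1 [Q2 [D1 [D2 E12]]]]]]]].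
  specialize (C1 y1 s1 Q1 ltac:(unfold dist2_Q1 in D1; lra)).
  specialize (C2 y2 s2 Q2 ltac:(unfold dist2_Q1 in D2; lra)).
  rewrite E12, Rabs_minus_sym in C1.
  assert (e <= Rabs (f x t - g y2 s2) + Rabs (g y2 s2 - g x t)).
  { unfold e. replace (f x t - g x t) with ((f x t - g y2 s2) + (g y2 s2 - g x t)) by ring.
    apply Rabs_triang. }
  lra.
Qed.

Lemma D_swap_interior n u D l d1 d2 x t : smooth_family n u D ->
  valid_dir n d1 -> valid_dir n d2 -> in_Q1 n x t -> interior_pair d1 d2 t ->
  D (d1 :: d2 :: l) x t = D (d2 :: d1 :: l) x t.
Proof.
  intros [_ [Hcont Hpar]] V1 V2 Hq Hc.
  assert (Hdec : {d1 = d2} + {d1 <> d2}) by (decide equality; apply Nat.eq_dec).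
  destruct Hdec as [->|ne]; [reflexivity|].
  destruct (in_Q1_mv2 n d1 d2 x t V1 V2 Hq Hc) as [r [Hr Hbox]].
  apply (continuous_Q1_eq_of_approx n); auto. intros del Hdel.
  set (h := Rmin (r / 4) (del / 2)).
  assert (Hh : 0 < h) by (apply Rmin_glb_lt; lra).
  assert (Hhr : h <= r / 4) by apply Rmin_l.
  assert (Hhd : h <= del / 2) by apply Rmin_r.
  destruct (mixed_partials_meet n d1 d2 x t r Hr Hbox (D l) (D (d1 :: l)) (D (d2 :: l))
              (D (d1 :: d2 :: l)) (D (d2 :: d1 :: l)) h)
    as [a1 [b1 [a2 [b2 [Ha1 [Hb1 [Ha2 [Hb2 E]]]]]]]]; try (apply Hpar; auto); [lra|].
  assert (Hsmall : forall a b, 0 <= a <= h -> 0 <= b <= h ->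
    in_Q1 n (mv2x d1 d2 x a b) (mv2t d1 d2 t a b) /\
    dist2_Q1 n x t (mv2x d1 d2 x a b) (mv2t d1 d2 t a b) < del ^ 2).
  { intros a b Ha Hb. rewrite dist2_Q1_mv2 by auto.
    split; [apply Hbox; rewrite Rabs_right; lra|nra]. }
  destruct (Hsmall a1 b1 Ha1 Hb1), (Hsmall a2 b2 Ha2 Hb2).
  exists (mv2x d1 d2 x a2 b2), (mv2t d1 d2 t a2 b2), (mv2x d1 d2 x a1 b1), (mv2t d1 d2 t a1 b1).
  auto.
Qed.

(* At [t = 0] a time derivative is one-sided; there the symmetry is inherited by
   continuity from the times [s < 0]. *)
Lemma D_swap n u D l d1 d2 x t : smooth_family n u D ->
  valid_dir n d1 -> valid_dir n d2 -> in_Q1 n x t ->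
  D (d1 :: d2 :: l) x t = D (d2 :: d1 :: l) x t.
Proof.
  intros Hs V1 V2 [Hx Ht].
  destruct (Rlt_dec t 0) as [Hneg|Hzero].
  { apply (D_swap_interior n u D l d1 d2 x t Hs V1 V2); [split; auto|left; auto]. }
  pose proof Hs as [_ [Hcont _]].
  apply (continuous_Q1_eq_of_approx n); [auto|auto|split; auto|]. intros del Hdel.
  set (s := t - Rmin del (t + 1) / 2).
  assert (Hm : 0 < Rmin del (t + 1)) by (apply Rmin_glb_lt; lra).
  assert (Hmd : Rmin del (t + 1) <= del) by apply Rmin_l.
  assert (Hmt : Rmin del (t + 1) <= t + 1) by apply Rmin_r.
  assert (Qs : in_Q1 n x s) by (split; auto; unfold s; lra).
  assert (Ds : dist2_Q1 n x t x s < del ^ 2).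
  { unfold dist2_Q1, sqnorm. rewrite (sumR_ext n _ (fun _ => 0)) by (intros; ring).
    rewrite sumR_0. unfold s. nra. }
  exists x, s, x, s. do 4 (split; [assumption|]).
  apply (D_swap_interior n u D l d1 d2 x s Hs V1 V2 Qs). left; unfold s; lra.
Qed.

(** * The pointwise algebra *)

Definition Weps n eps (q : pt) : R := sqnorm n q + eps ^ 2.
Definition dot n (v w : pt) : R := sumR n (fun i => v i * w i).
Definition matvec n (H : nat -> nat -> R) (q : pt) : pt := fun i => sumR n (fun m => q m * H i m).
Definition frob2 n (H : nat -> nat -> R) : R := dsum n (fun i j => H i j * H i j).

Lemma Weps_pos n eps q : 0 < eps -> 0 < Weps n eps q.
Proof. intros. unfold Weps. assert (0 <= sqnorm n q) by apply sqnorm_nonneg. nra. Qed.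

(* [dacoef ... k i j] is [∂_k (a_ij(∇u))] when [q = ∇u] and [H = D²u]. *)
Definition dacoef n p eps (q : pt) (H : nat -> nat -> R) (k i j : nat) : R :=
  (p - 2) * ((H k i * q j + q i * H k j) / Weps n eps q
             - q i * q j * (2 * matvec n H q k) / Weps n eps q ^ 2).

(* [∂_k (a_ij(∇u) u_ij)], with [T] the third derivatives of [u]. *)
Definition daop n p eps (q : pt) (H : nat -> nat -> R) (T : nat -> nat -> nat -> R) (k : nat) : R :=
  dsum n (fun i j => dacoef n p eps q H k i j * H i j + acoef n p eps q i j * T k i j).

(* [∂_ij φ] for [φ = W^(p/2)], [W = |∇u|² + ε²], [R1 = W^(p/2-1)]. *)
Definition phi_hess n p eps (q : pt) (H : nat -> nat -> R) (T : nat -> nat -> nat -> R)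
    (R1 : R) (i j : nat) : R :=
  p / 2 * (p / 2 - 1) * (R1 / Weps n eps q) * (2 * matvec n H q i) * (2 * matvec n H q j)
  + p / 2 * R1 * (2 * sumR n (fun k => H i k * H j k + q k * T i j k)).

Lemma dsum_acoef n p eps q M : dsum n (fun i j => acoef n p eps q i j * M i j) =
  sumR n (fun i => M i i) + (p - 2) / Weps n eps q * dsum n (fun i j => q i * q j * M i j).
Proof.
  unfold acoef. rewrite <- dsum_scal.
  rewrite (dsum_ext n _ (fun i j => kron i j * M i j + (p - 2) / Weps n eps q * (q i * q j * M i j)))
    by (intros; unfold Weps, Rdiv; ring).
  rewrite dsum_plus. f_equal. apply sumR_ext; intros. apply sumR_kron; auto.
Qed.

Section PointwiseAlgebra.

Variables (n : nat) (p eps : R) (q : pt) (H : nat -> nat -> R) (T : nat -> nat -> nat -> R).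
Hypothesis H_sym : forall i j, (i < n)%nat -> (j < n)%nat -> H i j = H j i.
Hypothesis T_sym : forall i j k, (i < n)%nat -> (j < n)%nat -> (k < n)%nat -> T i j k = T k i j.

Lemma matvec_sym i : (i < n)%nat -> sumR n (fun m => q m * H m i) = matvec n H q i.
Proof. intros Hi. apply sumR_ext; intros. rewrite H_sym; auto. Qed.

Lemma dsum_quad_form : dsum n (fun i j => q i * q j * H i j) = dot n q (matvec n H q).
Proof.
  apply sumR_ext; intros i _. unfold matvec. rewrite <- sumR_scal_l. apply sumR_ext; intros; ring.
Qed.

Lemma dsum_acoef_matvec :
  dsum n (fun i j => acoef n p eps q i j * (matvec n H q i * matvec n H q j)) =
  dot n (matvec n H q) (matvec n H q) + (p - 2) / Weps n eps q * dot n q (matvec n H q) ^ 2.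
Proof.
  rewrite dsum_acoef. f_equal. f_equal.
  rewrite (dsum_ext n _ (fun i j => (q i * matvec n H q i) * (q j * matvec n H q j))) by (intros; ring).
  rewrite dsum_prod. unfold dot. ring.
Qed.

Lemma dsum_acoef_hess_sq :
  dsum n (fun i j => acoef n p eps q i j * sumR n (fun k => H i k * H j k)) =
  frob2 n H + (p - 2) / Weps n eps q * dot n (matvec n H q) (matvec n H q).
Proof.
  rewrite dsum_acoef. f_equal. f_equal.
  rewrite (dsum_ext n _ (fun i j => sumR n (fun k => (q i * H i k) * (q j * H j k))))
    by (intros; rewrite <- sumR_scal_l; apply sumR_ext; intros; ring).
  rewrite dsum_sumR_swap. apply sumR_ext; intros k Hk.
  rewrite dsum_prod, matvec_sym; auto.
Qed.

Lemma dsum_acoef_d3 :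
  dsum n (fun i j => acoef n p eps q i j * sumR n (fun k => q k * T i j k)) =
  sumR n (fun k => q k * dsum n (fun i j => acoef n p eps q i j * T k i j)).
Proof.
  rewrite (dsum_ext n _ (fun i j => sumR n (fun k => q k * (acoef n p eps q i j * T k i j)))).
  - rewrite dsum_sumR_swap. apply sumR_ext; intros. apply dsum_scal.
  - intros i j Hi Hj. rewrite <- sumR_scal_l. apply sumR_ext; intros k Hk. rewrite T_sym; auto; ring.
Qed.

Lemma dsum_dacoef k : (k < n)%nat ->
  dsum n (fun i j => dacoef n p eps q H k i j * H i j) =
  2 * (p - 2) / Weps n eps q * sumR n (fun i => H k i * matvec n H q i)
  - 2 * (p - 2) * matvec n H q k / Weps n eps q ^ 2 * dot n q (matvec n H q).
Proof.
  intros Hk. unfold dacoef. set (W := Weps n eps q).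
  rewrite (dsum_ext n _ (fun i j => (p - 2) / W * (H k i * (q j * H i j))
      + (p - 2) / W * (H k j * (q i * H i j))
      - 2 * (p - 2) * matvec n H q k / W ^ 2 * (q i * q j * H i j))).
  2:{ intros. unfold Rdiv. ring. }
  rewrite dsum_minus, dsum_plus, !dsum_scal, dsum_quad_form.
  rewrite (dsum_transpose n (fun i j => H k j * (q i * H i j))).
  assert (E : forall f : nat -> nat -> R, (forall i, (i < n)%nat ->
      sumR n (fun j => f i j) = H k i * matvec n H q i) ->
      dsum n f = sumR n (fun i => H k i * matvec n H q i)).
  { intros f Hf. apply sumR_ext; auto. }
  rewrite !E.
  - unfold Rdiv; ring.
  - intros i Hi. rewrite <- matvec_sym, <- sumR_scal_l by auto. apply sumR_ext; intros; ring.
  - intros i Hi. unfold matvec. rewrite <- sumR_scal_l. reflexivity.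
Qed.

Lemma dot_matvec_sq :
  sumR n (fun k => q k * sumR n (fun i => H k i * matvec n H q i)) =
  dot n (matvec n H q) (matvec n H q).
Proof.
  rewrite (sumR_ext n _ (fun k => sumR n (fun i => matvec n H q i * (q k * H k i))))
    by (intros; rewrite <- sumR_scal_l; apply sumR_ext; intros; ring).
  rewrite sumR_swap. apply sumR_ext; intros i Hi.
  rewrite sumR_scal_l, matvec_sym; auto.
Qed.

Lemma phi_time_minus_aop_phi_hess R1 : 0 < eps ->
  p / 2 * R1 * (2 * sumR n (fun k => q k * daop n p eps q H T k))
  - aop n p eps q (phi_hess n p eps q H T R1)
  = - (p * R1) * (frob2 n H + p * (p - 2) * dot n q (matvec n H q) ^ 2 / Weps n eps q ^ 2).
Proof.
  intros Heps. assert (HW := Weps_pos n eps q Heps).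
  set (W := Weps n eps q) in *.
  assert (Ht : sumR n (fun k => q k * daop n p eps q H T k) =
     2 * (p - 2) / W * dot n (matvec n H q) (matvec n H q)
     - 2 * (p - 2) / W ^ 2 * dot n q (matvec n H q) ^ 2
     + sumR n (fun k => q k * dsum n (fun i j => acoef n p eps q i j * T k i j))).
  { unfold daop.
    rewrite (sumR_ext n _ (fun k => 2 * (p - 2) / W * (q k * sumR n (fun i => H k i * matvec n H q i))
        - 2 * (p - 2) / W ^ 2 * dot n q (matvec n H q) * (q k * matvec n H q k)
        + q k * dsum n (fun i j => acoef n p eps q i j * T k i j))).
    2:{ intros k Hk. rewrite dsum_plus, dsum_dacoef by auto. fold W. unfold Rdiv. ring. }
    rewrite sumR_plus, sumR_minus, !sumR_scal_l, dot_matvec_sq. unfold dot. ring. }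
  assert (Hs : aop n p eps q (phi_hess n p eps q H T R1) =
     p * (p - 2) * (R1 / W) * (dot n (matvec n H q) (matvec n H q) + (p - 2) / W * dot n q (matvec n H q) ^ 2)
     + p * R1 * (frob2 n H + (p - 2) / W * dot n (matvec n H q) (matvec n H q))
     + p * R1 * sumR n (fun k => q k * dsum n (fun i j => acoef n p eps q i j * T k i j))).
  { change (aop n p eps q ?M) with (dsum n (fun i j => acoef n p eps q i j * M i j)).
    unfold phi_hess. fold W.
    rewrite (dsum_ext n _ (fun i j => p * (p - 2) * (R1 / W) * (acoef n p eps q i j * (matvec n H q i * matvec n H q j))
       + p * R1 * (acoef n p eps q i j * sumR n (fun k => H i k * H j k))
       + p * R1 * (acoef n p eps q i j * sumR n (fun k => q k * T i j k)))).
    2:{ intros i j _ _. rewrite sumR_plus. field. lra. }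
    rewrite !dsum_plus, !dsum_scal, dsum_acoef_matvec, dsum_acoef_hess_sq, dsum_acoef_d3.
    reflexivity. }
  rewrite Ht, Hs. field. lra.
Qed.

End PointwiseAlgebra.

Lemma phi_hess_term_nonneg n p eps q H : 1 < p -> 0 < eps ->
  0 <= frob2 n H + p * (p - 2) * dot n q (matvec n H q) ^ 2 / Weps n eps q ^ 2.
Proof.
  intros Hp Heps. assert (HW := Weps_pos n eps q Heps).
  set (W := Weps n eps q) in *.
  set (N := frob2 n H). set (Y := dot n q (matvec n H q)).
  assert (HN : 0 <= N) by (apply dsum_nonneg; intros; nra).
  assert (CS : Y ^ 2 <= N * W ^ 2).
  { assert (EY : Y = dsum n (fun i j => (q i * q j) * H i j)).
    { unfold Y. rewrite <- dsum_quad_form. reflexivity. }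
    rewrite EY. eapply Rle_trans; [apply dsum_Cauchy_Schwarz|]. cbv beta.
    rewrite (dsum_ext n (fun i j => (q i * q j) ^ 2) (fun i j => q i ^ 2 * q j ^ 2)) by (intros; ring).
    rewrite (dsum_ext n (fun i j => H i j ^ 2) (fun i j => H i j * H i j)) by (intros; ring).
    rewrite dsum_prod. fold (sqnorm n q). change (dsum n (fun i j => H i j * H i j)) with N.
    assert (0 <= sqnorm n q) by apply sqnorm_nonneg.
    assert (sqnorm n q * sqnorm n q <= W ^ 2) by (unfold W, Weps; nra).
    nra. }
  set (X := Y ^ 2 / W ^ 2).
  assert (HX : 0 <= X <= N).
  { split; [apply Rmult_le_pos; [apply pow2_ge_0|apply Rlt_le, Rinv_0_lt_compat; nra]|].
    apply (Rmult_le_reg_r (W ^ 2)); [nra|]. unfold X, Rdiv. rewrite Rmult_assoc, Rinv_l; nra. }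
  replace (N + p * (p - 2) * Y ^ 2 / W ^ 2) with (N + p * (p - 2) * X) by (unfold X, Rdiv; ring).
  (* [p (p - 2) >= -1], so the worst case [p < 2] is [N - X >= 0]. *)
  assert (-1 <= p * (p - 2)) by nra.
  destruct (Rle_dec 2 p); nra.
Qed.

(** * Derivatives of phi and of the equation *)

Definition hessD (D : list dir -> pt -> R -> R) (x : pt) (t : R) : nat -> nat -> R :=
  fun i j => D (Sp i :: Sp j :: nil) x t.
Definition d3D (D : list dir -> pt -> R -> R) (x : pt) (t : R) : nat -> nat -> nat -> R :=
  fun i j k => D (Sp i :: Sp j :: Sp k :: nil) x t.

Definition dWeps n (D : list dir -> pt -> R -> R) (d : dir) (x : pt) (t : R) : R :=
  2 * sumR n (fun k => D (Sp k :: nil) x t * D (d :: Sp k :: nil) x t).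

Definition dphi n p eps (D : list dir -> pt -> R -> R) (d : dir) (x : pt) (t : R) : R :=
  p / 2 * Rpower (Weps n eps (gradD D x t)) (p / 2 - 1) * dWeps n D d x t.

Definition d2phi n p eps (D : list dir -> pt -> R -> R) (i j : nat) (x : pt) (t : R) : R :=
  phi_hess n p eps (gradD D x t) (hessD D x t) (d3D D x t)
    (Rpower (Weps n eps (gradD D x t)) (p / 2 - 1)) i j.

Section Derivatives.

Variables (n : nat) (u : pt -> R -> R) (D : list dir -> pt -> R -> R) (p eps : R).
Hypothesis smooth_u : smooth_family n u D.
Hypothesis eps_pos : 0 < eps.

Lemma has_partial_Q1_D l d : valid_dir n d -> has_partial_Q1 n (D l) (D (d :: l)) d.
Proof. apply smooth_u. Qed.

Lemma has_partial_Q1_Weps d : valid_dir n d ->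
  has_partial_Q1 n (fun x t => Weps n eps (gradD D x t)) (dWeps n D d) d.
Proof.
  intros V.
  assert (H := has_partial_Q1_plus n _ _ _ _ d
    (has_partial_Q1_sum n n (fun k x t => D (Sp k :: nil) x t * D (Sp k :: nil) x t) _ d
       (fun k _ => has_partial_Q1_mult n _ _ _ _ d (has_partial_Q1_D _ d V) (has_partial_Q1_D _ d V)))
    (has_partial_Q1_const n (eps ^ 2) d)).
  eapply has_partial_Q1_ext; [| |exact H]; intros x t _; unfold Weps, dWeps, sqnorm, gradD.
  - f_equal. apply sumR_ext; intros; ring.
  - rewrite <- sumR_scal_l, Rplus_0_r. apply sumR_ext; intros; ring.
Qed.

Lemma has_partial_Q1_phiD d : valid_dir n d ->
  has_partial_Q1 n (phiD n p eps D) (dphi n p eps D d) d.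
Proof.
  intros V. exact (has_partial_Q1_Rpower n _ _ d (p / 2)
    (fun x t _ => Weps_pos n eps _ eps_pos) (has_partial_Q1_Weps d V)).
Qed.

Lemma has_partial_Q1_dphi i j : (i < n)%nat -> (j < n)%nat ->
  has_partial_Q1 n (dphi n p eps D (Sp j)) (d2phi n p eps D i j) (Sp i).
Proof.
  intros Hi Hj.
  assert (HR := has_partial_Q1_Rpower n _ _ (Sp i) (p / 2 - 1)
    (fun x t _ => Weps_pos n eps _ eps_pos) (has_partial_Q1_Weps (Sp i) Hi)).
  assert (HdW : has_partial_Q1 n (dWeps n D (Sp j))
     (fun x t => 2 * sumR n (fun k => hessD D x t i k * hessD D x t j k
                                   + gradD D x t k * d3D D x t i j k)) (Sp i)).
  { apply has_partial_Q1_scal.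
    apply (has_partial_Q1_sum n n (fun k x t => D (Sp k :: nil) x t * D (Sp j :: Sp k :: nil) x t)).
    intros k _. apply has_partial_Q1_mult; apply has_partial_Q1_D; exact Hi. }
  eapply has_partial_Q1_ext; [| |exact (has_partial_Q1_mult n _ _ _ _ _ (has_partial_Q1_scal n (p / 2) _ _ _ HR) HdW)];
    intros x t _; [reflexivity|].
  assert (HW := Weps_pos n eps (gradD D x t) eps_pos).
  unfold d2phi, phi_hess, dWeps.
  replace (p / 2 - 1 - 1) with ((p / 2 - 1) + - (1)) by ring.
  rewrite Rpower_plus, Rpower_Ropp, Rpower_1 by exact HW.
  unfold matvec, hessD, gradD in *. field. lra.
Qed.

Lemma has_partial_Q1_aop k : (k < n)%nat ->
  has_partial_Q1 n (fun x t => aop n p eps (gradD D x t) (hessD D x t))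
    (fun x t => daop n p eps (gradD D x t) (hessD D x t) (d3D D x t) k) (Sp k).
Proof.
  intros Hk.
  assert (Hinv := has_partial_Q1_inv n _ _ (Sp k) (fun x t _ => Weps_pos n eps _ eps_pos)
                    (has_partial_Q1_Weps (Sp k) Hk)).
  assert (H := has_partial_Q1_sum n n _ _ (Sp k) (fun i _ => has_partial_Q1_sum n n _ _ (Sp k)
    (fun j _ => has_partial_Q1_mult n _ _ _ _ (Sp k)
      (has_partial_Q1_plus n _ _ _ _ (Sp k) (has_partial_Q1_const n (kron i j) (Sp k))
        (has_partial_Q1_scal n (p - 2) _ _ (Sp k)
          (has_partial_Q1_mult n _ _ _ _ (Sp k)
            (has_partial_Q1_mult n _ _ _ _ (Sp k)
              (has_partial_Q1_D (Sp i :: nil) (Sp k) Hk) (has_partial_Q1_D (Sp j :: nil) (Sp k) Hk))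
            Hinv)))
      (has_partial_Q1_D (Sp i :: Sp j :: nil) (Sp k) Hk)))).
  eapply has_partial_Q1_ext; [| |exact H]; intros x t _;
    apply sumR_ext; intros i _; apply sumR_ext; intros j _;
    assert (HW := Weps_pos n eps (gradD D x t) eps_pos);
    unfold acoef, dacoef, hessD, d3D, dWeps, matvec, Weps, gradD in *.
  - field. lra.
  - field. lra.
Qed.

Lemma D_Sp_eq_partial l i f g x t : (i < n)%nat ->
  (forall y s, in_Q1 n y s -> D l y s = f y s) -> has_partial_Q1 n f g (Sp i) ->
  in_Q1 n x t -> D (Sp i :: l) x t = g x t.
Proof.
  intros Hi Ef Hg Hq.
  apply (has_partial_Q1_unique n (D l) _ _ (Sp i) x t (has_partial_Q1_D l (Sp i) Hi)); auto;
    [|right; auto].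
  eapply has_partial_Q1_ext; [| |exact Hg]; auto.
  intros; symmetry; auto.
Qed.

Lemma d3D_sym x t i j k : (i < n)%nat -> (j < n)%nat -> (k < n)%nat -> in_Q1 n x t ->
  d3D D x t i j k = d3D D x t k i j.
Proof.
  intros Hi Hj Hk Hq. unfold d3D.
  rewrite <- (D_swap n u D (Sp j :: nil) (Sp i) (Sp k) x t smooth_u Hi Hk Hq).
  apply (D_Sp_eq_partial _ i (D (Sp k :: Sp j :: nil))); auto.
  - intros y s Hys. exact (D_swap n u D nil (Sp j) (Sp k) y s smooth_u Hj Hk Hys).
  - exact (has_partial_Q1_D _ (Sp i) Hi).
Qed.

Lemma D_time_grad x t k :
  (forall y s, in_Q1 n y s -> D (Tm :: nil) y s = aop n p eps (gradD D y s) (hessD D y s)) ->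
  (k < n)%nat -> in_Q1 n x t ->
  D (Tm :: Sp k :: nil) x t = daop n p eps (gradD D x t) (hessD D x t) (d3D D x t) k.
Proof.
  intros Hpde Hk Hq. rewrite (D_swap n u D nil Tm (Sp k) x t smooth_u I Hk Hq).
  exact (D_Sp_eq_partial (Tm :: nil) k _ _ x t Hk Hpde (has_partial_Q1_aop k Hk) Hq).
Qed.

End Derivatives.

Theorem lemma3p1 (n : nat) (p eps : R) (u : pt -> R -> R)
    (D : list dir -> pt -> R -> R) :
  1 < p -> 0 < eps ->
  smooth_family n u D ->
  (forall x t, in_Q1 n x t ->
     D (Tm :: nil) x t =
     aop n p eps (gradD D x t) (fun i j => D (Sp i :: Sp j :: nil) x t)) ->
  exists (phit : pt -> R -> R) (phi1 : nat -> pt -> R -> R)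
         (phi2 : nat -> nat -> pt -> R -> R),
    has_partial_Q1 n (phiD n p eps D) phit Tm /\
    (forall j, (j < n)%nat -> has_partial_Q1 n (phiD n p eps D) (phi1 j) (Sp j)) /\
    (forall i j, (i < n)%nat -> (j < n)%nat ->
       has_partial_Q1 n (phi1 j) (phi2 i j) (Sp i)) /\
    (forall x t, in_Q1 n x t ->
       phit x t - aop n p eps (gradD D x t) (fun i j => phi2 i j x t) <= 0).
Proof.
  intros Hp Heps Hs Hpde.
  exists (dphi n p eps D Tm), (fun j => dphi n p eps D (Sp j)), (d2phi n p eps D).
  split; [exact (has_partial_Q1_phiD n u D p eps Hs Heps Tm I)|].
  split; [intros j Hj; exact (has_partial_Q1_phiD n u D p eps Hs Heps (Sp j) Hj)|].
  split; [intros i j Hi Hj; exact (has_partial_Q1_dphi n u D p eps Hs Heps i j Hi Hj)|].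
  intros x t Hq.
  set (q := gradD D x t). set (H := hessD D x t). set (T := d3D D x t).
  set (R1 := Rpower (Weps n eps q) (p / 2 - 1)).
  change (p / 2 * R1 * (2 * sumR n (fun k => q k * D (Tm :: Sp k :: nil) x t))
          - aop n p eps q (phi_hess n p eps q H T R1) <= 0).
  rewrite (sumR_ext n _ (fun k => q k * daop n p eps q H T k))
    by (intros k Hk; rewrite (D_time_grad n u D p eps Hs Heps x t k Hpde Hk Hq); reflexivity).
  rewrite phi_time_minus_aop_phi_hess;
    [|intros i j Hi Hj; exact (D_swap n u D nil (Sp i) (Sp j) x t Hs Hi Hj Hq)
     |intros i j k Hi Hj Hk; exact (d3D_sym n u D Hs x t i j k Hi Hj Hk Hq)
     |exact Heps].
  assert (0 < p * R1) by (apply Rmult_lt_0_compat; [lra|apply exp_pos]).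
  assert (Hnn := phi_hess_term_nonneg n p eps q H Hp Heps).
  nra.
Qed.
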